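(* Let $0<p<1$, let $\epsilon_1,\epsilon_2,\dots$ be i.i.d. $\mathrm{Bernoulli}(p)$ random variables, and let $Y_i=\begin{pmatrix}\epsilon_i&1\\1&0\end{pmatrix}$, $S_n=Y_nY_{n-1}\cdots Y_1$. Then the top Lyapunov exponent $\lambda(p)=\lim_{n\to\infty}\frac1n\mathbb{E}[\log\|S_n\|]$ satisfies \[ \frac{p\log 3}{4-p}\le \lambda(p)\le \frac{p\log 3}{2}. \]
   Context: $\mathrm{Bernoulli}(p)$ means $\mathbb{P}(\epsilon=1)=p$, $\mathbb{P}(\epsilon=0)=1-p$. $\|\cdot\|$ is any matrix norm (the limit is independent of the choice). It is known that $\lambda(p)=\mathbb{E}[\log X_p]$, where $X_p$ is a $(0,\infty)$-valued random variable with atomless law, uniquely determined by $X_p\sim\frac1{X_p}+\epsilon$ with $\epsilon\sim\mathrm{Bernoulli}(p)$ independent of $X_p$. *)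

From Stdlib Require Import Reals List.
Import ListNotations.
Open Scope R_scope.

(* 2x2 real matrices [[a b];[c d]] as quadruples (a, b, c, d). *)
Definition mat2 : Type := (R * R * R * R)%type.

Definition mat2_mul (M N : mat2) : mat2 :=
  match M, N with
  | (a, b, c, d), (a', b', c', d') =>
      (a * a' + b * c', a * b' + b * d', c * a' + d * c', c * b' + d * d')
  end.

Definition mat2_id : mat2 := (1, 0, 0, 1).

(* The matrix norm used: entrywise 1-norm (a submultiplicative matrix norm);
   the Lyapunov exponent does not depend on the choice of norm. *)
Definition mat2_norm (M : mat2) : R :=
  match M with (a, b, c, d) => Rabs a + Rabs b + Rabs c + Rabs d end.

Definition Ymat (e : bool) : mat2 := (if e then 1 else 0, 1, 1, 0).

(* For the outcome list [e_1; ...; e_n], S_n = Y_n Y_{n-1} ... Y_1. *)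
Definition Sprod (l : list bool) : mat2 :=
  fold_left (fun M e => mat2_mul (Ymat e) M) l mat2_id.

Fixpoint all_bits (n : nat) : list (list bool) :=
  match n with
  | O => (@nil bool) :: nil
  | S k => map (cons true) (all_bits k) ++ map (cons false) (all_bits k)
  end.

Definition bern_prob (p : R) (l : list bool) : R :=
  List.fold_right (fun (e : bool) (acc : R) => (if e then p else 1 - p) * acc) 1 l.

Definition bern_expect (p : R) (n : nat) (f : list bool -> R) : R :=
  List.fold_right (fun (l : list bool) (acc : R) => bern_prob p l * f l + acc) 0 (all_bits n).

Definition lyap_seq (p : R) (n : nat) : R :=
  bern_expect p n (fun l => ln (mat2_norm (Sprod l))) / INR n.

(** The norm of [S_n] is the coordinate sum of [S_n (1,1)], a vector with
    nonnegative entries, and the expected log of that sum is sandwiched by two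
    potential functions on the positive quadrant.  [Y_0] swaps the coordinates
    and [Y_1] maps [(x, y)] to [(x + y, x)].  For the upper bound the potential
    [ln (2 (x^2 + y^2)) / 2] dominates [ln (x + y)], is invariant under [Y_0]
    and grows by at most [ln 3 / 2] under [Y_1].  For the lower bound the
    potential [ln (x + y) + kappa (x / (x + y) - 1)] is dominated by
    [ln (x + y)] and gains at least [p ln 3 / (4 - p)] per step in expectation,
    which reduces to a polynomial inequality in [p] and [t = x / (x + y)].
    Since [S_(n+m)] factors through [S_n] and the norm is submultiplicative,
    [E ln ||S_n||] is subadditive, so by Fekete's lemma [E ln ||S_n|| / n]
    converges to its infimum, which inherits both bounds. *)

From Stdlib Require Import Reals Lra Psatz Lia List Classical.
From Coquelicot Require Import Coquelicot.
Open Scope R_scope.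

Definition vsum (v : R * R) : R := fst v + snd v.

Definition pos_vec (v : R * R) : Prop := 0 <= fst v /\ 0 <= snd v /\ 0 < vsum v.

Definition Yact (e : bool) (v : R * R) : R * R :=
  let (x, y) := v in if e then (x + y, x) else (y, x).

Definition Yorbit (l : list bool) (v : R * R) : R * R :=
  fold_left (fun v e => Yact e v) l v.

Definition mat2_apply (M : mat2) (v : R * R) : R * R :=
  match M, v with (a, b, c, d), (x, y) => (a * x + b * y, c * x + d * y) end.

Definition mat2_nonneg (M : mat2) : Prop :=
  match M with (a, b, c, d) => 0 <= a /\ 0 <= b /\ 0 <= c /\ 0 <= d end.

Lemma mat2_apply_Ymul e M v :
  mat2_apply (mat2_mul (Ymat e) M) v = Yact e (mat2_apply M v).
Proof.
  destruct M as [[[a b] c] d], v as [x y], e; simpl; f_equal; ring.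
Qed.

Lemma mat2_apply_fold l M v :
  mat2_apply (fold_left (fun M e => mat2_mul (Ymat e) M) l M) v =
  Yorbit l (mat2_apply M v).
Proof.
  revert M v; induction l as [|e l IH]; intros M v; [reflexivity|].
  cbn [fold_left]; rewrite IH, mat2_apply_Ymul; reflexivity.
Qed.

Lemma mat2_apply_Sprod l v : mat2_apply (Sprod l) v = Yorbit l v.
Proof.
  unfold Sprod; rewrite mat2_apply_fold.
  destruct v; simpl; do 2 f_equal; ring.
Qed.

Lemma Sprod_nonneg l : mat2_nonneg (Sprod l).
Proof.
  unfold Sprod.
  assert (H : mat2_nonneg mat2_id) by (simpl; lra).
  revert H; generalize mat2_id.
  induction l as [|e l IH]; intros M HM; simpl; [exact HM|].
  apply IH; destruct M as [[[a b] c] d], e; simpl in *; lra.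
Qed.

Lemma mat2_norm_Sprod l : mat2_norm (Sprod l) = vsum (Yorbit l (1, 1)).
Proof.
  rewrite <- mat2_apply_Sprod; pose proof (Sprod_nonneg l) as H.
  destruct (Sprod l) as [[[a b] c] d]; unfold vsum; simpl in *.
  rewrite !Rabs_pos_eq by lra; ring.
Qed.

Lemma pos_vec_Yorbit l v : pos_vec v -> pos_vec (Yorbit l v).
Proof.
  revert v; induction l as [|e l IH]; intros v Hv; simpl; [exact Hv|].
  apply IH; destruct v as [x y], e; unfold pos_vec, vsum in *; simpl in *; lra.
Qed.

Lemma pos_vec_Yact e v : pos_vec v -> pos_vec (Yact e v).
Proof. exact (pos_vec_Yorbit (e :: nil) v). Qed.

Lemma pos_vec_ratio_bounds v : pos_vec v -> 0 <= fst v / vsum v <= 1.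
Proof.
  intros (Hx & Hy & Hs); split; [now apply Rdiv_le_0_compat|].
  apply (Rdiv_le_1 _ _ Hs); unfold vsum; lra.
Qed.

Lemma pos_vec_11 : pos_vec (1, 1).
Proof. unfold pos_vec, vsum; simpl; lra. Qed.

Lemma vsum_Yorbit_le l w :
  pos_vec w -> vsum (Yorbit l w) <= vsum w * vsum (Yorbit l (1, 1)).
Proof.
  intros Hw; rewrite <- !mat2_apply_Sprod; pose proof (Sprod_nonneg l) as H.
  destruct (Sprod l) as [[[a b] c] d], w as [x y]; unfold pos_vec, vsum in *; simpl in *.
  nra.
Qed.

Lemma ln_vsum_Yorbit_le l w : pos_vec w ->
  ln (vsum (Yorbit l w)) <= ln (vsum w) + ln (vsum (Yorbit l (1, 1))).
Proof.
  intros Hw.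
  destruct (pos_vec_Yorbit l w Hw) as (_ & _ & H1).
  destruct (pos_vec_Yorbit l (1, 1) pos_vec_11) as (_ & _ & H2).
  pose proof (vsum_Yorbit_le l w Hw). destruct Hw as (_ & _ & Hw).
  rewrite <- ln_mult by lra; apply ln_le; lra.
Qed.

Section BernoulliExpectation.
Variable p : R.

Let bern_sum (f : list bool -> R) (L : list (list bool)) : R :=
  fold_right (fun l acc => bern_prob p l * f l + acc) 0 L.

Lemma bern_sum_app f L1 L2 : bern_sum f (L1 ++ L2) = bern_sum f L1 + bern_sum f L2.
Proof. induction L1 as [|l L1 IH]; simpl; [ring|]; rewrite IH; ring. Qed.

Lemma bern_sum_map_cons f b L :
  bern_sum f (map (cons b) L) = (if b then p else 1 - p) * bern_sum (fun l => f (b :: l)) L.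
Proof. induction L as [|l L IH]; simpl; [ring|]; rewrite IH; destruct b; simpl; ring. Qed.

Lemma bern_expect_O f : bern_expect p 0 f = f nil.
Proof. unfold bern_expect; simpl; ring. Qed.

Lemma bern_expect_S n f : bern_expect p (S n) f =
  p * bern_expect p n (fun l => f (true :: l)) +
  (1 - p) * bern_expect p n (fun l => f (false :: l)).
Proof.
  unfold bern_expect; cbn [all_bits].
  etransitivity; [apply bern_sum_app|].
  now rewrite !bern_sum_map_cons.
Qed.

Lemma bern_expect_add n m f : bern_expect p (n + m) f =
  bern_expect p n (fun l1 => bern_expect p m (fun l2 => f (l1 ++ l2))).
Proof.
  revert f; induction n as [|n IH]; intros f; [now rewrite bern_expect_O|].
  rewrite Nat.add_succ_l, !bern_expect_S, !IH; reflexivity.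
Qed.

Lemma bern_expect_plus_const n f c :
  bern_expect p n (fun l => c + f l) = c + bern_expect p n f.
Proof.
  revert f; induction n as [|n IH]; intros f; [now rewrite !bern_expect_O|].
  rewrite !bern_expect_S, !IH; ring.
Qed.

Hypothesis p_prob : 0 <= p <= 1.

Lemma bern_expect_le n f g :
  (forall l, f l <= g l) -> bern_expect p n f <= bern_expect p n g.
Proof.
  revert f g; induction n as [|n IH]; intros f g Hfg.
  - rewrite !bern_expect_O; apply Hfg.
  - rewrite !bern_expect_S.
    pose proof (IH _ _ (fun l => Hfg (true :: l))).
    pose proof (IH _ _ (fun l => Hfg (false :: l))).
    nra.
Qed.

Lemma bern_expect_ext n f g :
  (forall l, f l = g l) -> bern_expect p n f = bern_expect p n g.
Proof. intros H; apply Rle_antisym; apply bern_expect_le; intros l; rewrite H; lra. Qed.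

End BernoulliExpectation.

Lemma ln3_pos : 0 < ln 3.
Proof. rewrite <- ln_1; apply ln_increasing; lra. Qed.

(* [exp 1.12 >= (1 + 0.035) ^ 32] by five squarings. *)
Lemma ln3_le : ln 3 <= 1.12.
Proof.
  assert (Hsq : forall x, exp (2 * x) = exp x * exp x)
    by (intros x; rewrite <- exp_plus; f_equal; ring).
  assert (1.035 <= exp 0.035) by (pose proof (exp_ineq1_le 0.035); lra).
  assert (1.0712 <= exp 0.07)
    by (replace 0.07 with (2 * 0.035) by lra; rewrite Hsq; nra).
  assert (1.1474 <= exp 0.14)
    by (replace 0.14 with (2 * 0.07) by lra; rewrite Hsq; nra).
  assert (1.3165 <= exp 0.28)
    by (replace 0.28 with (2 * 0.14) by lra; rewrite Hsq; nra).
  assert (1.7331 <= exp 0.56)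
    by (replace 0.56 with (2 * 0.28) by lra; rewrite Hsq; nra).
  assert (3 <= exp 1.12)
    by (replace 1.12 with (2 * 0.56) by lra; rewrite Hsq; nra).
  rewrite <- (ln_exp 1.12); apply ln_le; lra.
Qed.

(* The derivative of [ln (1 + x) - 2 x / (2 + x)] is [x^2 / ((1 + x) (2 + x)^2)]. *)
Lemma ln_1_plus_ge t : 0 <= t -> 2 * t / (2 + t) <= ln (1 + t).
Proof.
  intros Ht.
  destruct (Req_dec t 0) as [->|Ht0].
  { rewrite !Rplus_0_r, ln_1; unfold Rdiv; lra. }
  set (f x := ln (1 + x) - 2 * x / (2 + x)).
  destruct (MVT_cor3 f (fun x => x ^ 2 / ((1 + x) * (2 + x) ^ 2)) 0 t)
    as (c & Hc0 & Hct & Hf); [lra| |].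
  - intros x Hx _; apply is_derive_Reals; unfold f.
    auto_derive; [lra | field; lra].
  - assert (0 <= c ^ 2 / ((1 + c) * (2 + c) ^ 2)).
    { apply Rmult_le_pos; [nra|]; apply Rlt_le, Rinv_0_lt_compat; nra. }
    assert (f 0 = 0) by (unfold f; rewrite !Rplus_0_r, ln_1; field).
    unfold f in Hf at 1; nra.
Qed.

Section Potentials.
Variable p : R.
Hypothesis p_prob : 0 <= p <= 1.

Definition log_growth (n : nat) (v : R * R) : R :=
  bern_expect p n (fun l => ln (vsum (Yorbit l v))).

Lemma log_growth_S n v : log_growth (S n) v =
  p * log_growth n (Yact true v) + (1 - p) * log_growth n (Yact false v).
Proof. unfold log_growth; rewrite bern_expect_S; reflexivity. Qed.

Lemma log_growth_ge_potential (h : R * R -> R) (c : R) :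
  (forall v, pos_vec v -> h v <= ln (vsum v)) ->
  (forall v, pos_vec v -> h v + c <= p * h (Yact true v) + (1 - p) * h (Yact false v)) ->
  forall n v, pos_vec v -> INR n * c + h v <= log_growth n v.
Proof.
  intros Hbase Hdrift n; induction n as [|n IH]; intros v Hv.
  - unfold log_growth; rewrite bern_expect_O; simpl; specialize (Hbase v Hv); lra.
  - rewrite log_growth_S, S_INR.
    pose proof (IH _ (pos_vec_Yact true v Hv)).
    pose proof (IH _ (pos_vec_Yact false v Hv)).
    specialize (Hdrift v Hv); nra.
Qed.

Lemma log_growth_le_potential (h : R * R -> R) (c : R) :
  (forall v, pos_vec v -> ln (vsum v) <= h v) ->
  (forall v, pos_vec v -> p * h (Yact true v) + (1 - p) * h (Yact false v) <= h v + c) ->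
  forall n v, pos_vec v -> log_growth n v <= INR n * c + h v.
Proof.
  intros Hbase Hdrift n; induction n as [|n IH]; intros v Hv.
  - unfold log_growth; rewrite bern_expect_O; simpl; specialize (Hbase v Hv); lra.
  - rewrite log_growth_S, S_INR.
    pose proof (IH _ (pos_vec_Yact true v Hv)).
    pose proof (IH _ (pos_vec_Yact false v Hv)).
    specialize (Hdrift v Hv); nra.
Qed.

Lemma log_growth_subadd n m :
  log_growth (n + m) (1, 1) <= log_growth n (1, 1) + log_growth m (1, 1).
Proof.
  unfold log_growth; rewrite bern_expect_add.
  transitivity (bern_expect p n (fun l1 => ln (vsum (Yorbit l1 (1, 1))) +
                  bern_expect p m (fun l2 => ln (vsum (Yorbit l2 (1, 1)))))).
  - apply bern_expect_le; [exact p_prob|]; intros l1.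
    rewrite <- bern_expect_plus_const.
    apply bern_expect_le; [exact p_prob|]; intros l2.
    unfold Yorbit at 1; rewrite fold_left_app.
    apply ln_vsum_Yorbit_le, pos_vec_Yorbit, pos_vec_11.
  - rewrite (bern_expect_ext p p_prob n _
      (fun l1 => bern_expect p m (fun l2 => ln (vsum (Yorbit l2 (1, 1)))) +
                 ln (vsum (Yorbit l1 (1, 1))))) by (intros; ring).
    rewrite bern_expect_plus_const; lra.
Qed.

End Potentials.

Definition quad_potential (v : R * R) : R := ln (2 * (fst v ^ 2 + snd v ^ 2)) / 2.

Lemma ln_vsum_le_quad_potential v : pos_vec v -> ln (vsum v) <= quad_potential v.
Proof.
  destruct v as [x y]; unfold pos_vec, vsum, quad_potential; cbn [fst snd].
  intros (Hx & Hy & Hxy).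
  assert (ln ((x + y) ^ 2) <= ln (2 * (x ^ 2 + y ^ 2)))
    by (pose proof (pow2_ge_0 (x - y)); apply ln_le; nra).
  rewrite ln_pow in H by lra; simpl INR in H; lra.
Qed.

Lemma quad_potential_Y0 v : quad_potential (Yact false v) = quad_potential v.
Proof. destruct v as [x y]; unfold quad_potential; simpl; do 3 f_equal; ring. Qed.

Lemma quad_potential_Y1 v :
  pos_vec v -> quad_potential (Yact true v) <= quad_potential v + ln 3 / 2.
Proof.
  destruct v as [x y]; unfold pos_vec, vsum, quad_potential; cbn [fst snd Yact].
  intros (Hx & Hy & Hxy).
  assert (ln (2 * ((x + y) ^ 2 + x ^ 2)) <= ln 3 + ln (2 * (x ^ 2 + y ^ 2))); [|lra].
  pose proof (pow2_ge_0 (x - y)); pose proof (pow2_ge_0 y).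
  assert (0 < (x + y) ^ 2) by (apply pow_lt; lra).
  rewrite <- ln_mult by nra; apply ln_le; nra.
Qed.

Section TiltPotential.
Variable p : R.
Hypothesis p_prob : 0 <= p <= 1.

(* [kappa] is tuned so that [tilt_drift_poly] holds for all [p] and [t] in [[0, 1]]. *)
Definition kappa : R := p * (7 + 2 * p) / 20.

Definition tilt_potential (v : R * R) : R :=
  ln (vsum v) + kappa * (fst v / vsum v - 1).

Lemma kappa_bounds : 0 <= kappa <= 9 / 20.
Proof. unfold kappa; split; nra. Qed.

Lemma tilt_potential_le v : pos_vec v -> tilt_potential v <= ln (vsum v).
Proof.
  intros Hv; unfold tilt_potential.
  pose proof (pos_vec_ratio_bounds v Hv); pose proof kappa_bounds; nra.
Qed.

Lemma tilt_potential_increment v (t := fst v / vsum v) : pos_vec v ->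
  p * tilt_potential (Yact true v) + (1 - p) * tilt_potential (Yact false v)
    - tilt_potential v =
  p * ln (1 + t) + kappa * (p * (/ (1 + t) - t) + (1 - p) * (1 - 2 * t)).
Proof.
  destruct v as [x y]; subst t; unfold pos_vec, tilt_potential, vsum; cbn [fst snd Yact].
  intros (Hx & Hy & Hxy).
  replace (x + y + x) with ((x + y) * (1 + x / (x + y))) by (field; lra).
  replace (y + x) with (x + y) by ring.
  assert (0 <= x / (x + y)) by (apply Rdiv_le_0_compat; lra).
  rewrite ln_mult by lra; field; lra.
Qed.

Lemma tilt_drift_poly t : 0 <= t <= 1 ->
  1.12 * ((2 + t) * (1 + t) * 20) <=
  (4 - p) * (40 * t * (1 + t) + p * (7 + 2 * p) * ((2 + t) - t * (1 + t) * (2 + t))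
             + (1 - p) * (7 + 2 * p) * (1 - 2 * t) * (2 + t) * (1 + t)).
Proof.
  intros [Ht0 Ht1]; destruct p_prob as [Hp0 Hp1].
  assert (0 <= p * (1 - p)) by nra.
  assert (0 <= t * (1 - t)) by nra.
  assert (0 <= p * (1 - p) * t) by nra.
  nra.
Qed.

Lemma tilt_drift_scalar t : 0 <= t <= 1 ->
  p * ln 3 / (4 - p) <=
  p * ln (1 + t) + kappa * (p * (/ (1 + t) - t) + (1 - p) * (1 - 2 * t)).
Proof.
  intros Ht.
  set (B := p * (/ (1 + t) - t) + (1 - p) * (1 - 2 * t)).
  assert (Hq : ln 3 / (4 - p) <= 2 * t / (2 + t) + (7 + 2 * p) / 20 * B).
  { pose proof (tilt_drift_poly t Ht); pose proof ln3_le.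
    apply Rmult_le_reg_r with ((2 + t) * (1 + t) * 20 * (4 - p)); [nra|].
    replace (ln 3 / (4 - p) * ((2 + t) * (1 + t) * 20 * (4 - p)))
      with (ln 3 * ((2 + t) * (1 + t) * 20)) by (field; lra).
    replace ((2 * t / (2 + t) + (7 + 2 * p) / 20 * B) * ((2 + t) * (1 + t) * 20 * (4 - p)))
      with ((4 - p) * (40 * t * (1 + t) + p * (7 + 2 * p) * ((2 + t) - t * (1 + t) * (2 + t))
             + (1 - p) * (7 + 2 * p) * (1 - 2 * t) * (2 + t) * (1 + t)))
      by (unfold B; field; lra).
    nra. }
  pose proof (ln_1_plus_ge t (proj1 Ht)).
  replace (p * ln 3 / (4 - p)) with (p * (ln 3 / (4 - p))) by (unfold Rdiv; ring).
  replace (kappa * B) with (p * ((7 + 2 * p) / 20 * B)) by (unfold kappa, Rdiv; ring).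
  rewrite <- Rmult_plus_distr_l; apply Rmult_le_compat_l; lra.
Qed.

Lemma tilt_potential_drift v : pos_vec v ->
  tilt_potential v + p * ln 3 / (4 - p) <=
  p * tilt_potential (Yact true v) + (1 - p) * tilt_potential (Yact false v).
Proof.
  intros Hv.
  pose proof (tilt_potential_increment v Hv).
  pose proof (tilt_drift_scalar _ (pos_vec_ratio_bounds v Hv)); lra.
Qed.

End TiltPotential.

Section Fekete.
Variable a : nat -> R.
Hypothesis a_subadd : forall n m, a (n + m)%nat <= a n + a m.
Hypothesis a_nonneg : forall n, 0 <= a n.

Lemma subadd_iter k q r : a (q * k + r)%nat <= INR q * a k + a r.
Proof.
  induction q as [|q IH]; [simpl; lra|].
  replace (S q * k + r)%nat with (k + (q * k + r))%nat by lia.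
  rewrite S_INR; pose proof (a_subadd k (q * k + r)); lra.
Qed.

Lemma subadd_ratio_le k n : (1 <= k)%nat -> (1 <= n)%nat ->
  a n / INR n <= a k / INR k + (INR k * a 1 + a 0) / INR n.
Proof.
  intros Hk Hn.
  assert (Hk0 : 0 < INR k) by (apply lt_0_INR; lia).
  assert (Hn0 : 0 < INR n) by (apply lt_0_INR; lia).
  pose proof (Nat.div_mod_eq n k) as Hdiv.
  pose proof (Nat.mod_upper_bound n k ltac:(lia)) as Hmod.
  set (q := (n / k)%nat) in *; set (r := (n mod k)%nat) in *.
  assert (Hqk : INR q * INR k <= INR n) by (rewrite <- mult_INR; apply le_INR; lia).
  assert (Hr : a r <= INR k * a 1 + a 0).
  { pose proof (subadd_iter 1 r 0) as H; rewrite Nat.mul_1_r, Nat.add_0_r in H.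
    assert (INR r <= INR k) by (apply le_INR; lia).
    pose proof (a_nonneg 1); nra. }
  assert (Han : a n <= INR n * (a k / INR k) + (INR k * a 1 + a 0)).
  { pose proof (subadd_iter k q r) as H; rewrite Nat.mul_comm in Hdiv; rewrite <- Hdiv in H.
    assert (INR q * a k <= INR n * (a k / INR k)); [|lra].
    replace (INR q * a k) with (INR q * INR k * (a k / INR k)) by (field; lra).
    apply Rmult_le_compat_r; [apply Rdiv_le_0_compat|]; auto. }
  apply Rmult_le_reg_r with (INR n); [exact Hn0|].
  replace ((a k / INR k + (INR k * a 1 + a 0) / INR n) * INR n)
    with (INR n * (a k / INR k) + (INR k * a 1 + a 0)) by (field; lra).
  replace (a n / INR n * INR n) with (a n) by (field; lra).
  exact Han.
Qed.

Theorem fekete_subadditive : exists L,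
  Un_cv (fun n => a n / INR n) L /\
  (forall n, (1 <= n)%nat -> L <= a n / INR n) /\
  (forall c, (forall n, (1 <= n)%nat -> c <= a n / INR n) -> c <= L).
Proof.
  set (E x := exists n, (1 <= n)%nat /\ x = - (a n / INR n)).
  destruct (completeness E) as [M [HMub HMleast]].
  { exists 0; intros x [n [Hn ->]].
    assert (0 <= a n / INR n) by (apply Rdiv_le_0_compat, lt_0_INR; auto; lia).
    lra. }
  { exists (- (a 1%nat / INR 1)), 1%nat; split; [lia | reflexivity]. }
  assert (Hinf : forall n, (1 <= n)%nat -> - M <= a n / INR n).
  { intros n Hn; assert (- (a n / INR n) <= M) by (apply HMub; exists n; auto); lra. }
  assert (Hgreatest : forall c, (forall n, (1 <= n)%nat -> c <= a n / INR n) -> c <= - M).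
  { intros c Hc; assert (M <= - c); [|lra].
    apply HMleast; intros x [n [Hn ->]]; specialize (Hc n Hn); lra. }
  exists (- M); split; [|split; assumption].
  intros eps Heps.
  assert (Hk : exists k, (1 <= k)%nat /\ a k / INR k < - M + eps / 2).
  { apply NNPP; intros Hnone.
    assert (- M + eps / 2 <= - M); [|lra].
    apply Hgreatest; intros n Hn; apply Rnot_lt_le; intros Hlt; eauto. }
  destruct Hk as [k [Hk1 Hk]].
  set (C := INR k * a 1 + a 0).
  destruct (INR_archimed (eps / 2) C) as [N HN]; [lra|].
  exists (S N); intros n Hn; unfold R_dist.
  assert (Hn0 : 0 < INR n) by (apply lt_0_INR; lia).
  assert (HNn : INR N <= INR n) by (apply le_INR; lia).
  assert (HC : C / INR n < eps / 2).
  { apply Rmult_lt_reg_r with (INR n); [exact Hn0|].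
    replace (C / INR n * INR n) with C by (field; lra); nra. }
  pose proof (subadd_ratio_le k n Hk1 ltac:(lia)) as Hn_le; fold C in Hn_le.
  pose proof (Hinf n ltac:(lia)).
  rewrite Rabs_pos_eq; lra.
Qed.

End Fekete.

Lemma Rle_of_le_plus_div_INR x y c :
  (forall n, (1 <= n)%nat -> x <= y + c / INR n) -> x <= y.
Proof.
  intros H; apply Rnot_lt_le; intros Hyx.
  destruct (INR_archimed (x - y) c) as [N HN]; [lra|].
  specialize (H (S N) ltac:(lia)).
  assert (Hn0 : 0 < INR (S N)) by (apply lt_0_INR; lia).
  assert (INR N <= INR (S N)) by (apply le_INR; lia).
  assert (c < INR (S N) * (x - y)) by nra.
  assert (c / INR (S N) < x - y); [|lra].
  apply Rmult_lt_reg_r with (INR (S N)); [exact Hn0|].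
  replace (c / INR (S N) * INR (S N)) with c by (field; lra); lra.
Qed.

Section Bounds.
Variable p : R.
Hypothesis p_prob : 0 <= p <= 1.

Lemma lyap_seq_log_growth n : lyap_seq p n = log_growth p n (1, 1) / INR n.
Proof.
  unfold lyap_seq, log_growth; f_equal.
  apply bern_expect_ext; [exact p_prob|]; intros l; now rewrite mat2_norm_Sprod.
Qed.

Lemma log_growth_upper n : log_growth p n (1, 1) <= INR n * (p * ln 3 / 2) + ln 2.
Proof.
  assert (Hquad : quad_potential (1, 1) = ln 2).
  { unfold quad_potential; cbn [fst snd].
    replace (2 * (1 ^ 2 + 1 ^ 2)) with (2 * 2) by ring; rewrite ln_mult by lra; field. }
  rewrite <- Hquad; apply log_growth_le_potential; [exact p_prob | | | exact pos_vec_11].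
  - exact ln_vsum_le_quad_potential.
  - intros v Hv; rewrite quad_potential_Y0.
    pose proof (quad_potential_Y1 v Hv); destruct p_prob; nra.
Qed.

Lemma log_growth_lower n : INR n * (p * ln 3 / (4 - p)) <= log_growth p n (1, 1).
Proof.
  assert (Htilt : 0 <= tilt_potential p (1, 1)).
  { unfold tilt_potential, vsum; cbn [fst snd].
    replace (1 + 1) with 2 by ring; replace (1 / 2 - 1) with (- (1 / 2)) by field.
    pose proof ln_lt_2; pose proof (kappa_bounds p p_prob); lra. }
  enough (INR n * (p * ln 3 / (4 - p)) + tilt_potential p (1, 1) <= log_growth p n (1, 1))
    by lra.
  apply log_growth_ge_potential; [exact p_prob | | | exact pos_vec_11].
  - exact (tilt_potential_le p p_prob).
  - exact (tilt_potential_drift p p_prob).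
Qed.

End Bounds.

Theorem theorem3p3 (p : R) (hp0 : 0 < p) (hp1 : p < 1) :
  exists lambda : R,
    Un_cv (lyap_seq p) lambda /\
    p * ln 3 / (4 - p) <= lambda /\ lambda <= p * ln 3 / 2.
Proof.
  assert (Hp : 0 <= p <= 1) by lra.
  assert (Hcl : 0 <= p * ln 3 / (4 - p))
    by (pose proof ln3_pos; apply Rdiv_le_0_compat; nra).
  destruct (fekete_subadditive (fun n => log_growth p n (1, 1)))
    as (L & Hcv & Hinf & Hgreatest).
  - exact (log_growth_subadd p Hp).
  - intros n; pose proof (log_growth_lower p Hp n); pose proof (pos_INR n); nra.
  - exists L; repeat split.
    + apply (Un_cv_ext _ _ (fun n => eq_sym (lyap_seq_log_growth p Hp n)) L Hcv).
    + apply Hgreatest; intros n Hn.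
      apply (Rle_div_r _ _ _ (lt_0_INR n ltac:(lia))).
      rewrite Rmult_comm; apply log_growth_lower, Hp.
    + apply Rle_of_le_plus_div_INR with (ln 2); intros n Hn.
      assert (Hn0 : 0 < INR n) by (apply lt_0_INR; lia).
      apply Rle_trans with (1 := Hinf n Hn), (Rle_div_l _ _ _ Hn0).
      pose proof (log_growth_upper p Hp n).
      replace ((p * ln 3 / 2 + ln 2 / INR n) * INR n)
        with (INR n * (p * ln 3 / 2) + ln 2) by (field; lra); lra.
Qed.
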